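(* Let $d\ge1$, $p>1$, let $\{1,\dots,d\}$ be partitioned into $\mathcal{D}$ (desirable) and $\mathcal{U}$ (undesirable), let $c\in\mathbb{R}^d$ with $c_f>0$, let $\mathbb{C}\in\mathbb{R}^{d\times d}$ be the contribution matrix of a causal graph and $h_0\in\mathbb{R}^d$ with $\mathbb{C}h_0\ge0$ componentwise, let $\alpha\in\mathbb{R}$ and $\beta\in(0,1)$. Consider the agent's problem $$\min_{e\in\mathbb{R}^d,\ e\ge0}\ \Big(\sum_{f} c_f e_f^{\,p}\Big)^{1/p}\quad\text{s.t.}\quad(\mathbb{C}h_0)^\top e\ge\alpha .$$ If $$\Big[\sum_{f\in\mathcal{D}}\Big(\frac{(\mathbb{C}h_0)_f}{c_f}\Big)^{2/(p-1)}\Big]^{1/2}\ \ge\ \frac{\beta}{\sqrt{1-\beta^2}}\Big[\sum_{f\in\mathcal{U}}\Big(\frac{(\mathbb{C}h_0)_f}{c_f}\Big)^{2/(p-1)}\Big]^{1/2},$$ then every optimal solution (best response) of this problem is a $\beta$-desirable effort profile.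
   Context: A causal graph is a weighted directed acyclic graph on $\{1,\dots,d\}$ with adjacency matrix $A$ ($A_{ij}$ the weight of edge $i\to j$, $0$ if absent); its contribution matrix is $\mathbb{C}=\sum_{k=0}^{d}A^k$. An effort profile $e$ is $\beta$-desirable if $\|e_{\mathcal{D}}\|_2\ge\beta\|e\|_2$, where $e_{\mathcal{D}}$ is the restriction of $e$ to the coordinates in $\mathcal{D}$. *)

From HB Require Import structures.
From mathcomp Require Import all_boot all_order all_algebra.
From mathcomp Require Import reals exp.
Set Implicit Arguments. Unset Strict Implicit. Unset Printing Implicit Defensive.
Import Order.TTheory GRing.Theory Num.Theory.
Local Open Scope ring_scope.

Section Defs.
Variable R : realType.

Definition edge (d : nat) (A : 'M[R]_d) : rel 'I_d := fun i j => A i j != 0.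

Definition acyclic (d : nat) (A : 'M[R]_d) : Prop :=
  forall (x : 'I_d) (s : seq 'I_d), path (edge A) x s -> last x s = x -> s = [::].

Definition contribution (d : nat) (A : 'M[R]_d) : 'M[R]_d :=
  \sum_(k < d.+1) A ^+ k.

Definition norm2 (d : nat) (e : 'I_d -> R) : R := Num.sqrt (\sum_(f < d) e f ^+ 2).
Definition norm2_on (d : nat) (D : {set 'I_d}) (e : 'I_d -> R) : R :=
  Num.sqrt (\sum_(f in D) e f ^+ 2).

Definition beta_desirable (d : nat) (D : {set 'I_d}) (beta : R) (e : 'I_d -> R) : Prop :=
  norm2_on D e >= beta * norm2 e.

Definition cost (d : nat) (c : 'I_d -> R) (p : R) (e : 'I_d -> R) : R :=
  powR (\sum_(f < d) c f * powR (e f) p) (1 / p).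

Definition feasible (d : nat) (v : 'I_d -> R) (alpha : R) (e : 'I_d -> R) : Prop :=
  (forall f, 0 <= e f) /\ \sum_(f < d) v f * e f >= alpha.

Definition best_response (d : nat) (c v : 'I_d -> R) (p alpha : R) (e : 'I_d -> R) : Prop :=
  feasible v alpha e /\
  forall e' : 'I_d -> R, feasible v alpha e' -> cost c p e <= cost c p e'.

End Defs.

From HB Require Import structures.
From mathcomp Require Import all_boot all_order all_algebra.
From mathcomp Require Import reals exp sequences boolp.
From mathcomp Require Import ring lra.
Import Order.TTheory GRing.Theory Num.Theory.
Local Open Scope ring_scope.

(* With v := C h0 and w_f := (v_f / c_f)^(1/(p-1)), the point k w satisfies the
   first-order condition c_f (k w_f)^(p-1) = k^(p-1) v_f, and k can be chosen to
   make it feasible with the least possible value of v^T e.  Summing the strict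
   tangent-line inequalities of x |-> x^p with weights c_f then shows that no
   other feasible point has cost at most that of k w, so every best response is
   a multiple of w.  Its norms on D and on its complement are proportional to
   the two square roots of the hypothesis, which is exactly the inequality
   beta ||e_U|| <= sqrt(1 - beta^2) ||e_D||, i.e. beta ||e|| <= ||e_D||. *)

Section powR_convexity.
Variable R : realType.

Lemma powR_gt_bernoulli (p t : R) :
  1 < p -> 0 <= t -> t != 1 -> 1 + p * (t - 1) < t `^ p.
Proof.
move=> hp; rewrite le_eqVlt => /predU1P[<- _|t0 t1].
  by rewrite powR0 ?gt_eqF ?(lt_trans ltr01) //; lra.
set u := ln t.
have tE : expR u = t by rewrite lnK.
have t_ltu : t - 1 < t * u.
  have : 1 - u < expR (- u) by apply: expR_gt1Dx; rewrite oppr_eq0 ln_eq0.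
  rewrite -(ltr_pM2l t0) -{2}tE -expRD subrr expR0; lra.
have le_tp : t * (1 + (p - 1) * u) <= t `^ p.
  have -> : t `^ p = t * expR ((p - 1) * u).
    by rewrite /powR gt_eqF // -/u -{1}tE -expRD; congr expR; ring.
  by rewrite ler_pM2l // expR_ge1Dx.
have : (p - 1) * (t - 1) < (p - 1) * (t * u) by rewrite ltr_pM2l // subr_gt0.
lra.
Qed.

Lemma powR_tangent_lt (p x y : R) : 1 < p -> 0 <= x -> 0 <= y ->
  x != y -> y `^ p + p * y `^ (p - 1) * (x - y) < x `^ p.
Proof.
move=> hp x0; have p0 : 0 < p by rewrite (lt_trans ltr01).
rewrite le_eqVlt => /predU1P[<- x_neq0|y0 xy].
  rewrite !powR0 ?gt_eqF ?subr_gt0 // mulr0 mul0r addr0 powR_gt0 //.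
  by rewrite lt0r x_neq0.
have y_neq0 : y != 0 by rewrite gt_eqF.
have t1 : x / y != 1 by apply: contra xy => /eqP t1; rewrite -(divfK y_neq0 x) t1 mul1r.
have t0 : 0 <= x / y by rewrite divr_ge0 // ltW.
have := powR_gt_bernoulli p (x / y) hp t0 t1.
rewrite -(ltr_pM2r (powR_gt0 p y0)) -(powRM _ t0 (ltW y0)) divfK //.
by rewrite -mulr_powRB1 ?ltW //; congr (_ < _); field.
Qed.

End powR_convexity.

Section desirability.
Variables (R : realType) (d : nat).
Implicit Types (D : {set 'I_d}) (e : 'I_d -> R).

Lemma norm2E e : norm2 e = norm2_on [set: 'I_d] e.
Proof. by rewrite /norm2_on; under eq_bigl do rewrite in_setT. Qed.

Lemma norm2_onZ D (k : R) e : norm2_on D (fun f => k * e f) = `|k| * norm2_on D e.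
Proof.
rewrite /norm2_on; under eq_bigr do rewrite exprMn.
by rewrite -mulr_sumr sqrtrM ?sqr_ge0 // sqrtr_sqr.
Qed.

Lemma beta_desirableZ D beta (k : R) e :
  beta_desirable D beta e -> beta_desirable D beta (fun f => k * e f).
Proof.
rewrite /beta_desirable => le_e.
by rewrite norm2E !norm2_onZ -norm2E mulrCA; apply: ler_wpM2l.
Qed.

Lemma sqr_norm2_split D e :
  norm2 e ^+ 2 = norm2_on D e ^+ 2 + norm2_on (~: D) e ^+ 2.
Proof.
rewrite /norm2 /norm2_on !sqr_sqrtr ?sumr_ge0 // => [|f _|f _|f _]; try exact: sqr_ge0.
rewrite (bigID (mem D)) /=; congr (_ + _).
by apply: eq_bigl => f; rewrite in_setC.
Qed.

Lemma beta_desirable_of_ratio D beta e : 0 < beta < 1 ->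
  beta / Num.sqrt (1 - beta ^+ 2) * norm2_on (~: D) e <= norm2_on D e ->
  beta_desirable D beta e.
Proof.
case/andP=> b0 b1; set s := Num.sqrt _ => le_ratio.
have s2 : s ^+ 2 = 1 - beta ^+ 2 by rewrite sqr_sqrtr // subr_ge0 expr_le1 ?ltW.
have s_gt0 : 0 < s by rewrite sqrtr_gt0 subr_gt0 expr_lt1 ?ltW.
have a0 : 0 <= norm2_on D e := sqrtr_ge0 _.
have b_ge0 : 0 <= norm2_on (~: D) e := sqrtr_ge0 _.
have le_bs : beta * norm2_on (~: D) e <= s * norm2_on D e.
  by move: le_ratio; rewrite mulrAC ler_pdivrMr // [_ * s]mulrC.
have : (beta * norm2_on (~: D) e) ^+ 2 <= (s * norm2_on D e) ^+ 2.
  by rewrite ler_sqr ?nnegrE ?mulr_ge0 // ltW.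
rewrite !exprMn s2 => le_sq.
rewrite /beta_desirable -ler_sqr ?nnegrE ?mulr_ge0 ?sqrtr_ge0 ?(ltW b0) //.
rewrite exprMn (sqr_norm2_split D); lra.
Qed.

End desirability.

Section best_response.
Variables (R : realType) (d : nat) (p : R) (c v : 'I_d -> R).
Hypotheses (hp : 1 < p) (hc : forall f, 0 < c f).

Let p_gt0 : 0 < p. Proof. by rewrite (lt_trans ltr01). Qed.
Let p1_gt0 : 0 < p - 1. Proof. by rewrite subr_gt0. Qed.

Lemma cost_le_sum_powR (e e' : 'I_d -> R) : cost c p e <= cost c p e' ->
  \sum_f c f * e f `^ p <= \sum_f c f * e' f `^ p.
Proof.
have sum_ge0 (x : 'I_d -> R) : 0 <= \sum_f c f * x f `^ p.
  by apply: sumr_ge0 => f _; rewrite mulr_ge0 ?powR_ge0 ?ltW.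
apply: contraTT; rewrite -!ltNge => lt_sum.
by apply: gt0_ltr_powR; rewrite ?divr_gt0 ?nnegrE ?sum_ge0.
Qed.

Lemma first_order_min_unique (lam : R) (y e : 'I_d -> R) :
  0 <= lam -> (forall f, 0 <= y f) -> (forall f, 0 <= e f) ->
  (forall f, c f * y f `^ (p - 1) = lam * v f) ->
  \sum_f v f * y f <= \sum_f v f * e f ->
  \sum_f c f * e f `^ p <= \sum_f c f * y f `^ p ->
  e =1 y.
Proof.
move=> lam0 y0 e0 foc le_v le_cost.
pose gap f := e f `^ p - y f `^ p - p * y f `^ (p - 1) * (e f - y f).
have gap_gt0 f : e f != y f -> 0 < gap f.
  by move=> ne; rewrite /gap subr_gt0 ltrBrDl powR_tangent_lt.
have cgap_ge0 f : 0 <= c f * gap f.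
  apply: mulr_ge0; first exact: ltW.
  have [eq_f|/gap_gt0/ltW //] := eqVneq (e f) (y f).
  by rewrite /gap eq_f !subrr mulr0 subrr.
have sum_gap : \sum_f c f * gap f = \sum_f c f * e f `^ p - \sum_f c f * y f `^ p
    - p * lam * (\sum_f v f * e f - \sum_f v f * y f).
  rewrite -!sumrB mulr_sumr -sumrB; apply: eq_bigr => f _.
  transitivity (c f * e f `^ p - c f * y f `^ p
                - p * (c f * y f `^ (p - 1)) * (e f - y f)); first by rewrite /gap; ring.
  by rewrite foc; ring.
(* by the first-order condition, the linear parts of the tangent inequalities
   add up to [p * lam * (v^T e - v^T y)] >= 0 *)
have sum_gap0 : \sum_f c f * gap f = 0.
  apply/eqP; rewrite eq_le sumr_ge0 // andbT sum_gap.
  have : 0 <= p * lam * (\sum_f v f * e f - \sum_f v f * y f).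
    by rewrite mulr_ge0 ?subr_ge0 // mulr_ge0 // ltW.
  lra.
move=> f; apply/eqP; apply: contraT => /gap_gt0.
have /eqP := psumr_eq0P (fun f _ => cgap_ge0 f) sum_gap0 (i := f) isT.
by rewrite mulf_eq0 gt_eqF //= => /eqP ->; rewrite ltxx.
Qed.

Hypothesis hv : forall f, 0 <= v f.

Definition response_dir f := (v f / c f) `^ (p - 1)^-1.

Lemma response_dir_ge0 f : 0 <= response_dir f.
Proof. exact: powR_ge0. Qed.

Lemma response_dir_first_order k f : 0 <= k ->
  c f * (k * response_dir f) `^ (p - 1) = k `^ (p - 1) * v f.
Proof.
move=> k0; rewrite powRM ?response_dir_ge0 // -powRrM mulVf ?gt_eqF //.
rewrite powRr1 ?divr_ge0 ?(ltW (hc f)) //.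
by rewrite mulrCA [c f * _]mulrC divfK ?gt_eqF.
Qed.

Lemma sum_response_dir_eq0 : \sum_f v f * response_dir f = 0 -> forall f, v f = 0.
Proof.
move=> sum0 f.
have /eqP := psumr_eq0P (fun f _ => mulr_ge0 (hv f) (response_dir_ge0 f)) sum0 (i := f) isT.
rewrite mulf_eq0 => /orP[/eqP //|/eqP /powR_eq0_eq0 /eqP].
by rewrite mulf_eq0 invr_eq0 (gt_eqF (hc f)) orbF => /eqP.
Qed.

Lemma feasible_response_dir alpha e : feasible v alpha e ->
  exists2 k, 0 <= k & feasible v alpha (fun f => k * response_dir f)
    /\ \sum_f v f * (k * response_dir f) <= \sum_f v f * e f.
Proof.
move=> [e0 le_alpha].
have ve0 : 0 <= \sum_f v f * e f by apply: sumr_ge0 => f _; rewrite mulr_ge0.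
have [alpha_le0|alpha_gt0] := lerP alpha 0.
  exists 0 => //; rewrite /feasible big1 => [|f _]; last by rewrite mul0r mulr0.
  by split => //; split => // f; rewrite mul0r.
set S := \sum_f v f * response_dir f.
have S_ge0 : 0 <= S.
  by apply: sumr_ge0 => f _; rewrite mulr_ge0 ?response_dir_ge0.
have S_neq0 : S != 0.
  apply/eqP => /sum_response_dir_eq0 v0; move: le_alpha.
  rewrite big1 => [|f _]; last by rewrite v0 mul0r.
  by rewrite leNgt alpha_gt0.
have vk : \sum_f v f * (alpha / S * response_dir f) = alpha.
  by rewrite -[RHS](divfK S_neq0) mulr_sumr; apply: eq_bigr => f _; ring.
have k_ge0 : 0 <= alpha / S by rewrite divr_ge0 // ltW.
exists (alpha / S) => //; rewrite /feasible vk; split => //; split => // f.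
by rewrite mulr_ge0 ?response_dir_ge0.
Qed.

Lemma best_response_dir alpha e : best_response c v p alpha e ->
  exists k, e = (fun f => k * response_dir f).
Proof.
move=> [e_feas opt]; have [e0 _] := e_feas.
have [k k0 [y_feas le_v]] := feasible_response_dir _ _ e_feas.
exists k; apply/funext.
apply: (first_order_min_unique (k `^ (p - 1))) => //.
- exact: powR_ge0.
- by move=> f; rewrite mulr_ge0 ?response_dir_ge0.
- by move=> f; apply: response_dir_first_order.
- exact/cost_le_sum_powR/opt.
Qed.

Lemma response_dir_sqr f : response_dir f ^+ 2 = (v f / c f) `^ (2 / (p - 1)).
Proof.
by rewrite -powR_mulrn ?response_dir_ge0 // /response_dir -powRrM [_^-1 * _]mulrC.
Qed.

Lemma norm2_on_response_dir (D : {set 'I_d}) :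
  norm2_on D response_dir = Num.sqrt (\sum_(f in D) (v f / c f) `^ (2 / (p - 1))).
Proof. by rewrite /norm2_on; under eq_bigr do rewrite response_dir_sqr. Qed.

End best_response.

Theorem theorem2 (R : realType) (d : nat) (hd : (0 < d)%N)
    (D : {set 'I_d}) (p : R) (hp : 1 < p)
    (c : 'I_d -> R) (hc : forall f, 0 < c f)
    (A : 'M[R]_d) (hA : acyclic A)
    (h0 : 'cV[R]_d)
    (hCh0 : forall f, 0 <= (contribution A *m h0) f 0)
    (alpha beta : R) (hb0 : 0 < beta) (hb1 : beta < 1)
    (hcond : Num.sqrt (\sum_(f in D)
                 powR ((contribution A *m h0) f 0 / c f) (2 / (p - 1)))
             >= beta / Num.sqrt (1 - beta ^+ 2) *
                Num.sqrt (\sum_(f in ~: D)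
                 powR ((contribution A *m h0) f 0 / c f) (2 / (p - 1)))) :
  forall e : 'I_d -> R,
    best_response c (fun f => (contribution A *m h0) f 0) p alpha e ->
    beta_desirable D beta e.
Proof.
move=> e /best_response_dir - /(_ hp hc hCh0) [k ->].
apply/beta_desirableZ/beta_desirable_of_ratio; first by rewrite hb0 hb1.
by rewrite !norm2_on_response_dir.
Qed.
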